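(* Let $r\ge1$ and let $\lambda,\mu$ be pre-partitions of length at most $r$ with $\lambda\lhd\mu$. Then there exists a finite sequence of pre-partitions of length at most $r$, \[ \lambda=\nu^m\lhd\nu^{m-1}\lhd\cdots\lhd\nu^1\lhd\nu^0=\mu, \] such that for each $i$, $\nu^i$ is obtained from $\nu^{i-1}$ via a simple removal, an infinite removal, a slip, or a fall.
   Context: Let $\overline{\mathbb N}=\mathbb N\cup\{\infty\}$ with $\infty>n$ and $\infty+n=\infty$ for all $n$. A pre-partition of length at most $r$ is a non-increasing sequence $\lambda=(\lambda_1\ge\lambda_2\ge\dots\ge\lambda_r\ge0)$ in $\overline{\mathbb N}$ (all later terms being $0$). Co-domination: $\lambda\lhd\mu$ iff $\lambda_i+\lambda_{i+1}+\dots+\lambda_r\le\mu_i+\mu_{i+1}+\dots+\mu_r$ for all $i$. For pre-partitions $\lambda,\mu$: $\lambda$ is obtained from $\mu$ by a simple removal if, with $j$ the smallest index such that $\mu_j$ is finite, $\lambda_j=\mu_j-1$ and $\lambda_i=\mu_i$ for $i\ne j$; by an infinite removal if, with $j$ the largest index such that $\mu_j=\infty$, $\lambda_j<\mu_j=\infty$ and $\lambda_i=\mu_i$ for $i\ne j$; by a slip if for some $j\ge1$, $\lambda_{j+1}=\mu_{j+1}-1$, $\lambda_j=\mu_j+1$ and $\lambda_i=\mu_i$ for $i\notin\{j,j+1\}$; by a fall if for some $j<k$, $\lambda_k=\mu_k-1$, $\lambda_j=\mu_j+1$, $\lambda_i=\mu_i$ for $i\notin\{j,k\}$, and $\mu_i=\mu_{i'}$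 for all $i,i'\in\{j,\dots,k\}$. *)

From mathcomp Require Import all_boot.
Set Implicit Arguments. Unset Strict Implicit. Unset Printing Implicit Defensive.

(* Extended naturals N ∪ {∞}: [Some n] is the finite value n, [None] is ∞. *)
Definition natbar := option nat.
Definition inf_nb : natbar := None.
Definition fin (n : nat) : natbar := Some n.

Definition add_nb (x y : natbar) : natbar :=
  match x, y with Some a, Some b => Some (a + b) | _, _ => None end.

Definition le_nb (x y : natbar) : bool :=
  match x, y with
  | _, None => true
  | None, Some _ => false
  | Some a, Some b => a <= b
  end.

(* A sequence of length at most r: entries indexed by 'I_r (0-based),
   all later terms being 0. *)
Definition seqr (r : nat) := 'I_r -> natbar.

Definition is_prepartition (r : nat) (l : seqr r) : Prop :=
  forall i j : 'I_r, i <= j -> le_nb (l j) (l i).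

Definition tailsum (r : nat) (l : seqr r) (i : 'I_r) : natbar :=
  \big[add_nb/fin 0]_(k < r | i <= k) l k.

Definition codom_le (r : nat) (l m : seqr r) : Prop :=
  forall i : 'I_r, le_nb (tailsum l i) (tailsum m i).

Definition simple_removal (r : nat) (l m : seqr r) : Prop :=
  exists j : 'I_r,
    [/\ m j <> inf_nb,
        (forall k : 'I_r, k < j -> m k = inf_nb),
        add_nb (l j) (fin 1) = m j &
        (forall k : 'I_r, k != j -> l k = m k)].

Definition infinite_removal (r : nat) (l m : seqr r) : Prop :=
  exists j : 'I_r,
    [/\ m j = inf_nb,
        (forall k : 'I_r, j < k -> m k <> inf_nb),
        l j <> inf_nb &
        (forall k : 'I_r, k != j -> l k = m k)].

(* l obtained from m by a slip (λ_{j+1} = μ_{j+1} - 1 read as λ_{j+1} + 1 = μ_{j+1}) *)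
Definition slip (r : nat) (l m : seqr r) : Prop :=
  exists j k : 'I_r,
    [/\ val k = (val j).+1,
        add_nb (l k) (fin 1) = m k,
        l j = add_nb (m j) (fin 1) &
        (forall i : 'I_r, i != j -> i != k -> l i = m i)].

Definition fall (r : nat) (l m : seqr r) : Prop :=
  exists j k : 'I_r,
    [/\ j < k,
        add_nb (l k) (fin 1) = m k,
        l j = add_nb (m j) (fin 1),
        (forall i : 'I_r, i != j -> i != k -> l i = m i) &
        (forall i i' : 'I_r, j <= i <= k -> j <= i' <= k -> m i = m i')].

Definition elementary_move (r : nat) (l m : seqr r) : Prop :=
  [\/ simple_removal l m, infinite_removal l m, slip l m | fall l m].

From HB Require Import structures.
From mathcomp Require Import all_boot zify.
From Stdlib Require Import FunctionalExtensionality.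

Set Implicit Arguments.
Unset Strict Implicit.
Unset Printing Implicit Defensive.

(* Walk down from mu to lam by elementary moves, keeping lam ⊲ nu ⊲ mu.  If lam is
   finite at a place where mu is infinite, the last infinite entry of mu is made
   finite but large (an infinite removal); this lowers the number of infinite
   entries.  Otherwise lam and mu are infinite on the same initial segment and
   everything happens on their finite parts L and M.  Let k be the first index at
   which the tail sum of L is strictly below that of M and M drops strictly after k.
   One unit moves from k to the start j of the constant block of M containing k
   (a fall); if j = k, the unit is removed when k is the first finite index, and
   otherwise slips to k - 1, where the minimality of k leaves room.  Such a step
   lowers the sum of all finite tail sums, so the walk terminates. *)

Section NatTails.

Variable r : nat.
Implicit Types (L M N : nat -> nat) (a i j k x : nat).

Definition tsum N x := \sum_(x <= i < r) N i.

Lemma tsumS N x : x < r -> tsum N x = N x + tsum N x.+1.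
Proof. by move=> ?; rewrite /tsum big_ltn. Qed.

Lemma tsum_ge N x : r <= x -> tsum N x = 0.
Proof. by move=> ?; rewrite /tsum big_geq. Qed.

Lemma tsumD M N x : tsum (fun i => M i + N i) x = tsum M x + tsum N x.
Proof. exact: big_split. Qed.

Lemma tsum_delta k x : k < r -> tsum (fun i => i == k : nat) x = (x <= k).
Proof.
move=> hk; move Hd: (r - x) => d; elim: d x Hd => [|d IH] x Hd.
  by rewrite tsum_ge; lia.
by rewrite tsumS ?(IH x.+1); lia.
Qed.

Definition noninc a N := forall x y, a <= x <= y -> y < r -> N y <= N x.

Lemma nonincS a N : (forall x, a <= x -> x.+1 < r -> N x.+1 <= N x) -> noninc a N.
Proof.
move=> hS x y /andP[hax hxy]; rewrite -(subnKC hxy).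
elim: (y - x) => [|d IH] hd; first by rewrite addn0.
apply: leq_trans (IH _) => //; last lia.
by rewrite addnS; apply: hS; lia.
Qed.

Definition transfer j k M x :=
  if x == j then (M j).+1 else if x == k then (M k).-1 else M x.

Definition remove a M x := if x == a then (M a).-1 else M x.

Lemma tsum_transfer x j k M : j < k < r -> 0 < M k ->
  tsum (transfer j k M) x + (x <= k) = tsum M x + (x <= j).
Proof.
move=> /andP[hjk hk] hMk.
rewrite -(tsum_delta x hk) -(tsum_delta x (ltn_trans hjk hk)) -!tsumD.
apply: eq_bigr => i _; rewrite /transfer.
by case: eqP => [->|]; [|case: eqP => [->|]]; lia.
Qed.

Lemma tsum_remove x a M : a < r -> 0 < M a -> tsum (remove a M) x + (x <= a) = tsum M x.
Proof.
move=> har hMa; rewrite -(tsum_delta x har) -tsumD.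
by apply: eq_bigr => i _; rewrite /remove; case: eqP => [->|]; lia.
Qed.

Lemma noninc_transfer a j k M : a <= j -> j < k < r -> noninc a M ->
  (a < j -> M j < M j.-1) -> (k.+1 < r -> M k.+1 < M k) ->
  noninc a (transfer j k M).
Proof.
move=> haj /andP[hjk hk] hM hj hk1; apply: nonincS => x hax hx; rewrite /transfer.
have := hM x x.+1; rewrite hax leqnSn => /(_ isT hx).
have := hj; have := hk1.
by repeat case: eqP => ?; subst => //=; lia.
Qed.

Lemma noninc_remove a M : noninc a M -> (a.+1 < r -> M a.+1 < M a) ->
  noninc a (remove a M).
Proof.
move=> hM ha1; apply: nonincS => x hax hx; rewrite /remove.
have := hM x x.+1; rewrite hax leqnSn => /(_ isT hx).
have := ha1.
by repeat case: eqP => ?; subst => //=; lia.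
Qed.

(* [M] drops strictly right after [k], where [M r] counts as [0]. *)
Definition descent M k := (0 < M k) && ((k.+1 < r) ==> (M k.+1 < M k)).

(* Simple removal, slip and fall, read on the finite part of a pre-partition whose
   first [a] entries are infinite. *)
Definition nat_move a N M :=
  [\/ [/\ a < r, 0 < M a & N = remove a M],
      exists j, [/\ a <= j, j.+1 < r, 0 < M j.+1 & N = transfer j j.+1 M]
    | exists j k, [/\ a <= j, j < k < r, 0 < M k, N = transfer j k M &
                     forall i, j <= i <= k -> M i = M j]].

Lemma tsum_nat_move a N M : nat_move a N M ->
  (forall x, tsum N x <= tsum M x) /\ exists2 k, a <= k < r & tsum N k < tsum M k.
Proof.
case=> [[har hMa ->]|[j [haj hjr hMj ->]]|[j [k [haj hjk hMk -> _]]]].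
- split=> [x|]; first by have := tsum_remove x har hMa; lia.
  by exists a; rewrite ?leqnn ?har //; have := tsum_remove a har hMa; rewrite leqnn; lia.
- have hjk : j < j.+1 < r by rewrite ltnSn.
  split=> [x|]; first by have := tsum_transfer x hjk hMj; lia.
  exists j.+1; first by rewrite hjr andbT; lia.
  by have := tsum_transfer j.+1 hjk hMj; rewrite leqnn ltnn; lia.
- split=> [x|]; first by have := tsum_transfer x hjk hMk; lia.
  have [hjk' hkr] := andP hjk; exists k; first by rewrite hkr andbT; lia.
  by have := tsum_transfer k hjk hMk; rewrite leqnn leqNgt hjk'; lia.
Qed.

Section Step.

Variables (a : nat) (L M : nat -> nat).
Hypotheses (hL : noninc a L) (hM : noninc a M).
Hypothesis hLM : forall x, a <= x -> tsum L x <= tsum M x.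

Lemma exists_strict_descent : (exists2 x, a <= x < r & L x != M x) ->
  exists k, [&& a <= k, k < r, tsum L k < tsum M k & descent M k].
Proof.
move=> [x0 /andP[hax0 hx0r] /eqP hne].
pose P k := [&& a <= k, k < r & tsum L k < tsum M k].
have exP : exists k, P k.
  case: (ltnP (tsum L x0) (tsum M x0)) => h0; first by exists x0; apply/and3P.
  case: (ltnP (tsum L x0.+1) (tsum M x0.+1)) => h1.
    exists x0.+1; apply/and3P; split=> //; first lia.
    by case: ltnP => // hr; move: h1; rewrite !tsum_ge.
  have := hLM hax0; have := hLM (leqW hax0).
  by move: h0; rewrite !(tsumS _ hx0r); lia.
have ubP k : P k -> k <= r by case/and3P=> _ /ltnW.
have [k /and3P[hak hkr hsk] hmax] := ex_maxnP exP ubP.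
have eq_after i : k < i -> tsum L i = tsum M i.
  move=> hki; case: (ltnP i r) => hir; last by rewrite !tsum_ge.
  have hai : a <= i by lia.
  case: (ltnP (tsum L i) (tsum M i)) => [hlt|]; last by have := hLM hai; lia.
  by have := hmax i; rewrite /P hai hir hlt => /(_ isT); lia.
(* The last strict index is a descent. *)
have hLk := eq_after k.+1 (ltnSn k).
exists k; rewrite hak hkr hsk /=; apply/andP; split.
  by move: hsk; rewrite !(tsumS _ hkr) hLk; lia.
apply/implyP => hk1; have := eq_after k.+2 (ltnW (ltnSn _)).
have : L k.+1 <= L k by apply: hL hk1; rewrite hak leqnSn.
by move: hsk hLk; rewrite !(tsumS _ hkr) !(tsumS _ hk1); lia.
Qed.

Lemma strict_pred x : a <= x -> M x.+1 = M x ->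
  tsum L x.+2 < tsum M x.+2 -> tsum L x.+1 < tsum M x.+1.
Proof.
move=> hax hMx hs2; case: (ltnP x.+1 r) => hx1; last by move: hs2; rewrite !tsum_ge //; lia.
have hLx : L x.+1 <= L x by apply: hL hx1; rewrite hax leqnSn.
have := hLM hax; have := hLM (leqW hax).
by rewrite !(tsumS _ (ltnW hx1)) !(tsumS _ hx1); lia.
Qed.

Lemma strict_block j k : a <= j -> (forall i, j <= i <= k -> M i = M k) ->
  tsum L k < tsum M k -> forall i, j < i <= k -> tsum L i < tsum M i.
Proof.
move=> haj hc hsk i /andP[hji hik]; move Hd: (k - i) => d.
elim: d i hji hik Hd => [|d IH] [|p] // hji hik Hd.
  by have -> : p.+1 = k by lia.
apply: strict_pred; first lia.
  by rewrite !hc //; lia.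
by apply: IH; lia.
Qed.

Lemma gap_before_strict p : a < p -> tsum L p = tsum M p ->
  tsum L p.+1 < tsum M p.+1 -> M p < M p.-1.
Proof.
case: p => [|q] // haq heq hs; case: (ltnP q.+1 r) => hqr; last first.
  by move: hs; rewrite !tsum_ge //; lia.
have hLq : L q.+1 <= L q by apply: hL hqr; rewrite -ltnS haq leqnSn.
have := hLM (haq : a <= q).
by move: heq hs; rewrite !(tsumS _ (ltnW hqr)) !(tsumS _ hqr) /=; lia.
Qed.

Lemma block_start k : a <= k < r -> exists2 j, a <= j <= k &
  (forall i, j <= i <= k -> M i = M k) /\ (a < j -> M j < M j.-1).
Proof.
move=> /andP[hak hkr].
have exR : exists i, (a <= i) && (M i == M k) by exists k; rewrite hak eqxx.
have [j /andP[haj /eqP hMj] hmin] := ex_minnP exR.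
have hjk : j <= k by apply: hmin; rewrite hak eqxx.
exists j; first by rewrite haj hjk.
split=> [i /andP[hji hik]|].
  have : M i <= M j by apply: hM; rewrite ?haj ?hji ?(leq_ltn_trans hik).
  have : M k <= M i by apply: hM; rewrite ?hik ?(leq_trans haj hji).
  lia.
case: j haj hMj hmin hjk => [|p] // haj hMj hmin hjk hap /=.
have : M p.+1 <= M p.
  by apply: hM (leq_ltn_trans hjk hkr); rewrite -ltnS hap leqnSn.
rewrite leq_eqVlt => /orP[/eqP hMp|] //.
by have := hmin p; rewrite -ltnS hap -hMp hMj eqxx ltnn => /(_ isT).
Qed.

Lemma tsum_le_transfer j k : j < k < r -> 0 < M k ->
  (forall i, j < i <= k -> tsum L i < tsum M i) ->
  forall x, a <= x -> tsum L x <= tsum (transfer j k M) x.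
Proof.
move=> hjk hMk hs x hax; have := tsum_transfer x hjk hMk; have := hLM hax.
by case: (boolP (j < x <= k)) => [/hs|]; lia.
Qed.

Lemma tsum_le_remove : a < r -> 0 < M a -> tsum L a < tsum M a ->
  forall x, a <= x -> tsum L x <= tsum (remove a M) x.
Proof.
move=> har hMa hs x hax; have := tsum_remove x har hMa; have := hLM hax.
by case: (eqVneq x a) => [->|]; lia.
Qed.

Lemma exists_nat_move : (exists2 x, a <= x < r & L x != M x) -> exists N,
  [/\ noninc a N, forall x, a <= x -> tsum L x <= tsum N x & nat_move a N M].
Proof.
move=> /exists_strict_descent exk.
have [k /and4P[hak hkr hsk /andP[hMk /implyP hk1]] hmin] := ex_minnP exk.
have [j /andP[haj hjk] [hc hgap]] := block_start (introT andP (conj hak hkr)).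
case: (ltngtP j k) hjk => // [hlt|ejk] _.
  have hjkr : j < k < r by rewrite hlt.
  exists (transfer j k M); split.
  - exact: noninc_transfer.
  - by apply: tsum_le_transfer => //; apply: strict_block.
  - apply: Or33; exists j, k; split=> // i hi.
    by rewrite !hc // leqnn (ltnW hlt).
subst k; case: (ltnP a j) => haj'; last first.
  have eja : j = a by lia.
  subst j; exists (remove a M); split.
  - exact: noninc_remove.
  - exact: tsum_le_remove.
  - exact: Or31.
case: j => [|p] // in hak haj haj' hkr hsk hMk hk1 hmin hc hgap *.
have hpp := hgap haj'; rewrite /= in hpp.
have hap : a <= p by [].
(* [p] is a descent before [k], hence not strict by minimality of [k]. *)
have heq : tsum L p = tsum M p.
  case: (ltnP (tsum L p) (tsum M p)) => [hlt|]; last by have := hLM hap; lia.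
  have hMp : 0 < M p by apply: leq_ltn_trans hpp.
  by have := hmin p; rewrite /descent hap (ltnW hkr) hlt hMp hkr hpp ltnn => /(_ isT).
exists (transfer p p.+1 M); split.
- apply: noninc_transfer; rewrite ?ltnSn //.
  by move=> hap'; apply: gap_before_strict.
- apply: tsum_le_transfer; rewrite ?ltnSn // => i hi.
  by have -> : i = p.+1 by lia.
- by apply: Or32; exists p.
Qed.

End Step.

End NatTails.

Lemma add_nbA : associative add_nb.
Proof. by case=> [a|] [b|] [c|] //=; rewrite addnA. Qed.

Lemma add_nbC : commutative add_nb.
Proof. by case=> [a|] [b|] //=; rewrite addnC. Qed.

Lemma add0nb : left_id (fin 0) add_nb.
Proof. by case. Qed.

HB.instance Definition _ :=
  Monoid.isComLaw.Build natbar (fin 0) add_nb add_nbA add_nbC add0nb.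

Lemma le_nb_refl x : le_nb x x.
Proof. by case: x => //= n; rewrite leqnn. Qed.

Lemma le_nb_inf x : le_nb x inf_nb.
Proof. by case: x. Qed.

Section Prepartitions.

Variable r : nat.
Implicit Types (l : seqr r) (L M N : nat -> nat) (a : nat).

Lemma prepartition_inf l (x y : 'I_r) :
  is_prepartition l -> y <= x -> l x = inf_nb -> l y = inf_nb.
Proof. by move=> hl hyx hx; have := hl y x hyx; rewrite hx; case: (l y). Qed.

Lemma prepartition_fin l (x y : 'I_r) :
  is_prepartition l -> x <= y -> l x <> inf_nb -> l y <> inf_nb.
Proof. by move=> hl hxy hx /(prepartition_inf hl hxy). Qed.

Lemma prepartition_inf_prefix l : is_prepartition l ->
  exists a, forall x : 'I_r, (x < a) = (l x == inf_nb).
Proof.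
move=> hl; pose P k := [forall x : 'I_r, (k <= x) ==> (l x != inf_nb)].
have exP : exists k, P k by exists r; apply/forallP => x; rewrite leqNgt ltn_ord.
have [a /forallP ha hmin] := ex_minnP exP.
exists a => x; case: (ltnP x a) => hxa; last by have := ha x; rewrite hxa => /negbTE.
case hx: (l x) => [v|] //; suff /hmin : P x by rewrite leqNgt hxa.
apply/forallP => y; apply/implyP => hxy; apply/eqP.
by apply: (prepartition_fin hl hxy); rewrite hx.
Qed.

Lemma tailsum_inf l (i k : 'I_r) : i <= k -> l k = inf_nb -> tailsum l i = inf_nb.
Proof. by move=> hik hk; rewrite /tailsum (bigD1 k) //= hk. Qed.

Lemma tailsum_fin l (i : 'I_r) : (forall k : 'I_r, i <= k -> l k <> inf_nb) ->
  tailsum l i = fin (\sum_(k < r | i <= k) odflt 0 (l k)).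
Proof.
move=> h; rewrite /tailsum (eq_bigr (fun k => fin (odflt 0 (l k)))).
  by apply/esym/(big_morph fin).
by move=> k /h; case: (l k).
Qed.

Lemma eq_tailsum l l' (i : 'I_r) : (forall k : 'I_r, i <= k -> l k = l' k) ->
  tailsum l i = tailsum l' i.
Proof. exact: eq_bigr. Qed.

Definition seq_of a N : seqr r := fun x => if x < a then inf_nb else fin (N x).

(* Junk value [0] at infinite entries and beyond [r]. *)
Definition finite_part l (k : nat) : nat := oapp (fun x => odflt 0 (l x)) 0 (insub k).

Lemma seq_of_finite_part l a : (forall x : 'I_r, (x < a) = (l x == inf_nb)) ->
  l = seq_of a (finite_part l).
Proof.
move=> h; apply: functional_extensionality => x.
by rewrite /seq_of /finite_part valK /= h; case: (l x).
Qed.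

Lemma tailsum_seq_of a N (i : 'I_r) :
  tailsum (seq_of a N) i = if i < a then inf_nb else fin (tsum r N i).
Proof.
case: ltnP => hai; first by apply: (@tailsum_inf _ i i) => //; rewrite /seq_of hai.
rewrite tailsum_fin => [|k hik]; last by rewrite /seq_of ltnNge (leq_trans hai hik).
congr fin; rewrite /tsum big_geq_mkord; apply: eq_bigr => k hik.
by rewrite /seq_of ltnNge (leq_trans hai hik).
Qed.

Lemma prepartition_seq_of a N : is_prepartition (seq_of a N) <-> noninc r a N.
Proof.
split=> h.
  move=> x y /andP[hax hxy] hy; have := h (Ordinal (leq_ltn_trans hxy hy)) (Ordinal hy) hxy.
  by rewrite /seq_of /= !ltnNge hax (leq_trans hax hxy).
move=> i j hij; rewrite /seq_of; case: (ltnP i a) => hi; first exact: le_nb_inf.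
by rewrite ltnNge (leq_trans hi hij) /=; apply: h; rewrite ?hi.
Qed.

Lemma codom_le_seq_of a L M :
  codom_le (seq_of a L) (seq_of a M) <-> forall x, a <= x -> tsum r L x <= tsum r M x.
Proof.
split=> h x; last by rewrite !tailsum_seq_of; case: ltnP => // /h.
move=> hax; case: (ltnP x r) => hxr; last by rewrite !tsum_ge.
by have := h (Ordinal hxr); rewrite !tailsum_seq_of /= ltnNge hax.
Qed.

Lemma seq_of_transfer a N M (j k : 'I_r) : a <= j -> j < k -> 0 < M k ->
  N = transfer j k M ->
  [/\ add_nb (seq_of a N k) (fin 1) = seq_of a M k,
      seq_of a N j = add_nb (seq_of a M j) (fin 1) &
      forall i : 'I_r, i != j -> i != k -> seq_of a N i = seq_of a M i].
Proof.
move=> haj hjk hMk ->; rewrite /seq_of /transfer (gtn_eqF hjk) !eqxx.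
rewrite !ltnNge haj (leq_trans haj (ltnW hjk)) /= !addn1 prednK //; split=> // i hij hik.
by rewrite !val_eqE (negbTE hij) (negbTE hik).
Qed.

Lemma elementary_move_seq_of a N M :
  nat_move r a N M -> elementary_move (seq_of a N) (seq_of a M).
Proof.
case=> [[har hMa ->]|[j [haj hjr hMj hN]]|[j [k [haj /andP[hjk hkr] hMk hN hc]]]].
- apply: Or41; exists (Ordinal har); rewrite /seq_of /remove /= ltnn eqxx.
  split=> [//|k /= ->//|/=|k]; first by rewrite addn1 prednK.
  by rewrite -val_eqE /= => /negbTE ->.
- apply: Or43; exists (Ordinal (ltnW hjr)), (Ordinal hjr).
  by have [? ? ?] := seq_of_transfer (j:=Ordinal (ltnW hjr)) (k:=Ordinal hjr) haj (ltnSn _) hMj hN.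
- apply: Or44; exists (Ordinal (ltn_trans hjk hkr)), (Ordinal hkr).
  have [? ? ?] := seq_of_transfer (j:=Ordinal (ltn_trans hjk hkr)) (k:=Ordinal hkr) haj hjk hMk hN.
  split=> // i i' /andP[hji hik] /andP[hji' hik']; rewrite /seq_of /=.
  by rewrite !ltnNge (leq_trans haj hji) (leq_trans haj hji') /= hc ?hji ?hik // hc ?hji' ?hik'.
Qed.

Definition inf_count l := #|[pred x | l x == inf_nb]|.

Definition tail_weight l := \sum_(x < r) odflt 0 (tailsum l x).

Lemma inf_count_seq_of a N M : inf_count (seq_of a N) = inf_count (seq_of a M).
Proof. by apply: eq_card => x; rewrite /seq_of !inE; case: ltnP. Qed.

Lemma tail_weight_seq_of a N M : (forall x, tsum r N x <= tsum r M x) ->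
  (exists2 k, a <= k < r & tsum r N k < tsum r M k) ->
  tail_weight (seq_of a N) < tail_weight (seq_of a M).
Proof.
move=> hle [k /andP[hak hkr] hlt]; have hka : (k < a) = false by rewrite ltnNge hak.
rewrite /tail_weight (bigD1 (Ordinal hkr)) // [X in _ < X](bigD1 (Ordinal hkr)) //=.
rewrite !tailsum_seq_of /= hka /=.
rewrite -addSn leq_add // leq_sum // => i _.
by rewrite !tailsum_seq_of; case: (i < a); [exact: leqnn | exact: hle].
Qed.

End Prepartitions.

Section Steps.

Variable r : nat.
Implicit Types lam mu nu : seqr r.

Definition move_toward lam nu mu :=
  [/\ is_prepartition nu, codom_le lam nu, codom_le nu mu & elementary_move nu mu].

Definition fill_at l (j : 'I_r) v : seqr r := fun x => if x == j then v else l x.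

Section FillLastInfinite.

Variables (mu : seqr r) (j : 'I_r) (V : nat).
Hypotheses (hmu : is_prepartition mu) (hj : mu j = inf_nb).
Hypothesis hfin : forall k : 'I_r, j < k -> mu k <> inf_nb.
Implicit Types i k : 'I_r.

Local Notation nu := (fill_at mu j (fin V)).

Lemma fill_at_neq k : k != j -> nu k = mu k.
Proof. by rewrite /fill_at => /negbTE ->. Qed.

Lemma fill_at_before i : i < j -> nu i = inf_nb.
Proof.
by move=> hij; rewrite fill_at_neq ?(prepartition_inf hmu (ltnW hij)) // -val_eqE ltn_eqF.
Qed.

Lemma tailsum_fill_at_after i : j < i -> tailsum nu i = tailsum mu i.
Proof.
move=> hji; apply: eq_tailsum => k hik; apply: fill_at_neq.
by rewrite -val_eqE gtn_eqF // (leq_trans hji hik).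
Qed.

Lemma tailsum_fill_at : tailsum nu j = fin (V + \sum_(k < r | j < k) odflt 0 (mu k)).
Proof.
rewrite tailsum_fin => [|k hjk]; last first.
  case: (eqVneq k j) => [->|hk]; first by rewrite /fill_at eqxx.
  by rewrite fill_at_neq //; apply: hfin; rewrite ltn_neqAle eq_sym val_eqE hk hjk.
rewrite (bigD1 j) //= /fill_at eqxx; congr (fin (_ + _)); apply: eq_big => k.
  by rewrite ltn_neqAle eq_sym val_eqE andbC.
by move=> /andP[_ /negbTE ->].
Qed.

Lemma prepartition_fill_at : (forall k : 'I_r, j < k -> le_nb (mu k) (fin V)) ->
  is_prepartition nu.
Proof.
move=> hV i i' hii'; case: (eqVneq i' j) => [ei'|hi'].
  subst i'; case: (eqVneq i j) => [->|hi]; first exact: le_nb_refl.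
  by rewrite (fill_at_before (i:=i)) ?le_nb_inf // ltn_neqAle val_eqE hi hii'.
rewrite fill_at_neq //; case: (eqVneq i j) => [ei|hi]; last first.
  by rewrite fill_at_neq //; apply: hmu.
by subst i; rewrite /fill_at eqxx hV // ltn_neqAle eq_sym val_eqE hi' hii'.
Qed.

Lemma codom_le_fill_at : codom_le nu mu.
Proof.
move=> i; case: (leqP i j) => hij; first by rewrite (tailsum_inf hij hj) le_nb_inf.
by rewrite tailsum_fill_at_after // le_nb_refl.
Qed.

Lemma infinite_removal_fill_at : infinite_removal nu mu.
Proof. by exists j; split=> //; [rewrite /fill_at eqxx | apply: fill_at_neq]. Qed.

Lemma inf_count_fill_at : inf_count nu < inf_count mu.
Proof.
apply: proper_card; apply/properP; split.
  by apply/subsetP => x; rewrite !inE /fill_at; case: (eqVneq x j) => [->|].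
by exists j; rewrite !inE /fill_at ?eqxx ?hj.
Qed.

End FillLastInfinite.

Lemma move_toward_infinite lam mu (x0 : 'I_r) :
  is_prepartition lam -> is_prepartition mu -> codom_le lam mu ->
  lam x0 <> inf_nb -> mu x0 = inf_nb ->
  exists2 nu, move_toward lam nu mu & inf_count nu < inf_count mu.
Proof.
move=> hlam hmu hcod hx0 hmu0.
have [j /eqP hj hmax] := @arg_maxnP _ x0 (fun x => mu x == inf_nb) val (introT eqP hmu0).
have hfin (k : 'I_r) : j < k -> mu k <> inf_nb by move=> hjk /eqP /hmax /=; rewrite leqNgt hjk.
have hlj : lam j <> inf_nb := prepartition_fin hlam (hmax x0 (introT eqP hmu0)) hx0.
(* Large enough for [lam ⊲ nu] at [j] and for [nu] to stay non-increasing. *)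
pose S := \sum_(k < r | j < k) odflt 0 (mu k).
exists (fill_at mu j (fin (odflt 0 (tailsum lam j) + S))); last exact: inf_count_fill_at.
split; last exact: Or42 (infinite_removal_fill_at _ hj hfin).
- apply: prepartition_fill_at hmu hj _ => k hjk; case hmk: (mu k) => [v|] /=.
    by rewrite (leq_trans _ (leq_addl _ _)) // /S (bigD1 k) //= hmk leq_addr.
  by case: (hfin k hjk).
- move=> i; case: (ltngtP i j) => hij.
  + by rewrite (tailsum_inf (leqnn i) (fill_at_before _ hmu hj hij)) le_nb_inf.
  + by rewrite tailsum_fill_at_after //; apply: hcod.
  + have -> : i = j by apply: val_inj.
    have htl : tailsum lam j = fin (odflt 0 (tailsum lam j)).
      by rewrite tailsum_fin // => k hjk; apply: prepartition_fin hlj.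
    by rewrite tailsum_fill_at // {1}htl /= -addnA leq_addr.
- exact: codom_le_fill_at.
Qed.

Lemma codom_le_inf_prefix lam mu a : codom_le lam mu ->
  (forall x, lam x <> inf_nb -> mu x <> inf_nb) ->
  (forall x : 'I_r, (x < a) = (mu x == inf_nb)) ->
  forall x : 'I_r, (x < a) = (lam x == inf_nb).
Proof.
move=> hcod hfin ha x; rewrite ha; apply/idP/idP => /eqP hx; apply/eqP.
  by case hlx: (lam x) => //; case: (hfin x _ hx); rewrite hlx.
case: (ltnP x a) => hxa; first by apply/eqP; rewrite -ha.
have := hcod x; rewrite (tailsum_inf (leqnn x) hx) tailsum_fin // => k hxk.
by apply/eqP; rewrite -ha -leqNgt (leq_trans hxa hxk).
Qed.

Lemma move_toward_finite lam mu (y : 'I_r) :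
  is_prepartition lam -> is_prepartition mu -> codom_le lam mu ->
  (forall x, lam x <> inf_nb -> mu x <> inf_nb) -> lam y <> mu y ->
  exists2 nu, move_toward lam nu mu &
    inf_count nu = inf_count mu /\ tail_weight nu < tail_weight mu.
Proof.
move=> hlam hmu hcod hfin hne; have [a ha] := prepartition_inf_prefix hmu.
have hla := codom_le_inf_prefix hcod hfin ha.
set L := finite_part lam; set M := finite_part mu.
have eL : lam = seq_of a L := seq_of_finite_part hla.
have eM : mu = seq_of a M := seq_of_finite_part ha.
have hay : a <= y.
  rewrite leqNgt ha; apply/eqP => hy; apply: hne.
  by rewrite hy; apply/eqP; rewrite -hla ha hy.
have hdiff : exists2 x, a <= x < r & L x != M x.
  exists (val y); first by rewrite hay ltn_ord.
  rewrite /L /M /finite_part valK /=; move: hne (hla y) (ha y).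
  rewrite ltnNge hay; case: (lam y) (mu y) => [u|] [v|] //= hne _ _.
  by apply/eqP => huv; apply: hne; rewrite huv.
have hL : noninc r a L by apply/prepartition_seq_of; rewrite -eL.
have hM : noninc r a M by apply/prepartition_seq_of; rewrite -eM.
have hLM : forall x, a <= x -> tsum r L x <= tsum r M x.
  by apply/codom_le_seq_of; rewrite -eL -eM.
have [N [hN hLN hmove]] := exists_nat_move hL hM hLM hdiff.
have [hNM hlt] := tsum_nat_move hmove.
rewrite eL eM; exists (seq_of a N); first split.
- exact/prepartition_seq_of.
- exact/codom_le_seq_of.
- by apply/codom_le_seq_of => x _; apply: hNM.
- exact: elementary_move_seq_of.
- by split; [apply: inf_count_seq_of | apply: tail_weight_seq_of].
Qed.

Lemma exists_move_toward lam mu : is_prepartition lam -> is_prepartition mu -> codom_le lam mu ->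
  (exists y, lam y <> mu y) ->
  exists2 nu, move_toward lam nu mu & inf_count nu < inf_count mu \/
    inf_count nu = inf_count mu /\ tail_weight nu < tail_weight mu.
Proof.
move=> hlam hmu hcod [y hy].
case: (boolP [exists x, (lam x != inf_nb) && (mu x == inf_nb)]).
  move=> /existsP [x /andP[/eqP hlx /eqP hmx]].
  by have [nu ? ?] := move_toward_infinite hlam hmu hcod hlx hmx; exists nu => //; left.
rewrite negb_exists => /forallP hfin.
have hfin' x : lam x <> inf_nb -> mu x <> inf_nb.
  by move=> /eqP hlx /eqP hmx; have := hfin x; rewrite hlx hmx.
by have [nu ? ?] := move_toward_finite hlam hmu hcod hfin' hy; exists nu => //; right.
Qed.

Definition move_chain lam mu := exists (m : nat) (nu : nat -> seqr r),
  [/\ nu 0 = mu, nu m = lam &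
      forall i, 0 < i <= m ->
        [/\ is_prepartition (nu i), codom_le (nu i) (nu i.-1) &
            elementary_move (nu i) (nu i.-1)]].

Lemma move_chain_refl mu : move_chain mu mu.
Proof. by exists 0, (fun _ => mu); split=> // -[]. Qed.

Lemma move_chain_cons lam nu mu : move_toward lam nu mu -> move_chain lam nu ->
  move_chain lam mu.
Proof.
move=> [hnu _ hnumu hmv] [m [s [s0 sm hs]]].
exists m.+1, (fun i => if i is i'.+1 then s i' else mu); split=> // -[|[|i]] //= hi.
  by rewrite s0.
exact: hs.
Qed.

Lemma move_chain_of_codom_le lam mu : is_prepartition lam -> is_prepartition mu ->
  codom_le lam mu -> move_chain lam mu.
Proof.
(* Lexicographic induction on [(inf_count mu, tail_weight mu)]. *)
move=> hlam; move: {2}(inf_count mu).+1 (ltnSn (inf_count mu)) => c.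
move: {2}(tail_weight mu).+1 (ltnSn (tail_weight mu)) => w.
elim: c w mu => [|c IHc] // w; elim: w => [|w IHw] // mu hw hc hmu hcod.
case: (boolP [forall x, lam x == mu x]) => [/forallP heq|].
  have -> : mu = lam by apply: functional_extensionality => x; apply/esym/eqP.
  exact: move_chain_refl.
rewrite negb_forall => /existsP [y /eqP hy].
have [nu hstep hdec] := exists_move_toward hlam hmu hcod (ex_intro _ y hy).
have [hnu hlnu _ _] := hstep; apply: move_chain_cons hstep _.
case: hdec => [hlt|[heq hlt]].
  by apply: (IHc (tail_weight nu).+1) => //; apply: leq_trans hlt _.
by apply: IHw => //; [apply: leq_trans hlt _ | rewrite heq].
Qed.

End Steps.

Theorem theorem2p1 (r : nat) (lam mu : 'I_r -> natbar) :
  0 < r ->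
  is_prepartition lam -> is_prepartition mu ->
  codom_le lam mu ->
  exists (m : nat) (nu : nat -> 'I_r -> natbar),
    [/\ (forall k, nu 0 k = mu k),
        (forall k, nu m k = lam k) &
        (forall i, 0 < i <= m ->
           [/\ is_prepartition (nu i),
               codom_le (nu i) (nu i.-1) &
               elementary_move (nu i) (nu i.-1)])].
Proof.
move=> _ hlam hmu hcod.
have [m [nu [h0 hm hs]]] := move_chain_of_codom_le hlam hmu hcod.
by exists m, nu; split=> // k; rewrite ?h0 ?hm.
Qed.
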